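(* Assume $n\ge 3t+1$. In any execution of COOL, $\eta^{[2]}\le 2$.
   Context: Setting. $n$ processors indexed by $[1:n]$, pairwise joined by reliable private synchronous channels; recipients know senders. At most $t$ processors are dishonest, controlled by an adversary who may make them deviate arbitrarily (missing values replaced by a fixed default); the others are honest. Processor $i$ holds an $\ell$-bit initial message $\boldsymbol w_i$. $\phi$ is a default value different from every $\ell$-bit message. Logarithms are base 2. Code. $k=\lfloor t/5\rfloor+1$, $c=\lceil \max\{\ell,(t/5+1)\log(n+1)\}/k\rceil$. Messages are zero-padded to $kc$ bits and viewed in $GF(2^c)^k$. Integers in $[1:n]$ are identified with distinct nonzero elements of $GF(2^c)$; $\boldsymbol h_i\in GF(2^c)^k$ has entries $h_{i,j}=\prod_{p\in[1:k],\,p\ne j}\frac{i-p}{j-p}$ (field arithmetic). COOL, Phases 1–2 (honest processor $i$). Initialization: updated message $\boldsymbol w^{(i)}:=\boldsymbol w_i$, $y^{(i)}_j:=\boldsymbol h_j^{\mathsf T}\boldsymbol w_i$, $u_i(i):=1$. Phase 1. (a) Send $(y^{(i)}_j,y^{(i)}_i)$ to each $j\ne i$. (b) For $j\ne i$, link indicator $u_i(j):=1$ if the pair received from $j$ equals $(y^{(i)}_i,y^{(i)}_j)$, else $0$. Success indicator $s_i:=1$ if $\sum_{j=1}^n u_i(j)\ge n-t$; otherwise $s_i:=0$ and $\boldsymbol w^{(i)}:=\phi$. (c) Send $s_i$ to all; each processor records the indicator received from each $j$ (own for itself) and forms $\mathcal S_1=\{j:s_j=1\}$, $\mathcal S_0=\{j:s_j=0\}$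 (views may differ between processors). Phase 2. If $s_i=1$: set $u_i(j):=0$ for all $j\in\mathcal S_0$; if now $\sum_j u_i(j)<n-t$, set $s_i:=0$, $\boldsymbol w^{(i)}:=\phi$ and send $s_i=0$ to all. Everyone overwrites recorded indicators with newly received ones and recomputes $\mathcal S_0,\mathcal S_1$. Notation. For $p\in\{1,2\}$, $s^{[p]}_i$ is the value of honest processor $i$'s success indicator at the end of Phase $p$, and $\eta^{[p]}$ is the number of distinct values in $\{\boldsymbol w_i: i\text{ honest},\ s^{[p]}_i=1\}$ (initial messages). *)

(* Model of Phases 1-2 of COOL (honest processors' view). *)
From HB Require Import structures.
From mathcomp Require Import all_boot all_order all_algebra all_field.
From mathcomp Require Import zify.
Set Implicit Arguments. Unset Strict Implicit. Unset Printing Implicit Defensive.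
Import GRing.Theory.

Definition kpar (t : nat) : nat := (t %/ 5).+1.

(* c = ceil( max{l, (t/5+1) log2(n+1)} / k ), i.e. the least m such that
   m*k >= l and m*k >= (t/5+1) log2(n+1); the latter is equivalent to
   (n+1)^(t+5) <= 2^(5*m*k). *)
Definition cpred (n t l : nat) (m : nat) : bool :=
  (l <= m * kpar t) && ((n.+1) ^ (t + 5) <= 2 ^ (5 * (m * kpar t))).

Lemma cpred_ex n t l : exists m, cpred n t l m.
Proof.
exists (l + (t + 5) * n.+1); rewrite /cpred /kpar.
move: (t %/ 5) => q; apply/andP; split.
  by nia.
apply: (@leq_trans ((2 ^ n.+1) ^ (t + 5))).
  by rewrite leq_exp2r ?addn_gt0 ?orbT // ltnW // ltn_expl.
rewrite -expnM leq_pexp2l //; nia.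
Qed.

Definition cpar (n t l : nat) : nat := ex_minn (cpred_ex n t l).

Local Open Scope ring_scope.

Section COOL.
Variables (n t l : nat) (F : finFieldType).
(* toF : fixed bijection between c-bit strings and GF(2^c) *)
Variable toF : (cpar n t l).-tuple bool -> F.
(* emb : identification of the integers 1..n with distinct nonzero field elements *)
Variable emb : nat -> F.
Variable honest : {set 'I_n}.
(* initial l-bit messages (processor i : 'I_n is processor number i+1) *)
Variable w : 'I_n -> l.-tuple bool.
(* adv1 i j : pair received by honest i from dishonest j in Phase 1(a) *)
Variable adv1 : 'I_n -> 'I_n -> F * F.
(* adv2 i j : success indicator received by honest i from dishonest j in Phase 1(c) *)
Variable adv2 : 'I_n -> 'I_n -> bool.

Definition encode (m : l.-tuple bool) : 'rV[F]_(kpar t) :=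
  let c := cpar n t l in
  let pad := (m : seq bool) ++ nseq (kpar t * c - l) false in
  \row_(j < kpar t) toF [tuple nth false pad (j * c + b) | b < c].

(* h_{x,j} for x an integer label, j : 'I_k standing for integer j+1 *)
Definition hcoef (x : nat) (j : 'I_(kpar t)) : F :=
  \prod_(p < kpar t | p != j) ((emb x - emb p.+1) / (emb j.+1 - emb p.+1)).

Definition lab (i : 'I_n) : nat := i.+1.

Definition yval (i : 'I_n) (x : nat) : F :=
  \sum_(m < kpar t) hcoef x m * encode (w i) 0 m.

Definition recv1 (i j : 'I_n) : F * F :=
  if j \in honest then (yval j (lab i), yval j (lab j)) else adv1 i j.

Definition u1 (i j : 'I_n) : bool :=
  if j == i then true else recv1 i j == (yval i (lab i), yval i (lab j)).

Definition s1 (i : 'I_n) : bool := (n - t <= #|[set j | u1 i j]|)%N.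

Definition rec1 (i j : 'I_n) : bool :=
  if j == i then s1 i else if j \in honest then s1 j else adv2 i j.

(* s_i^[2]: u_i(j) zeroed for j in S_0 (i's view), then threshold re-checked *)
Definition s2 (i : 'I_n) : bool :=
  s1 i && (n - t <= #|[set j | u1 i j && rec1 i j]|)%N.

Definition eta2 : nat := #|[set w i | i in [set i in honest | s2 i]]|.

End COOL.

From HB Require Import structures.
From mathcomp Require Import all_boot all_order all_algebra all_field.
From mathcomp Require Import zify.
Import GRing.Theory.
Set Implicit Arguments. Unset Strict Implicit. Unset Printing Implicit Defensive.

(* An honest processor i with s_i = 1 has a link with at least n - t - d honest
   processors j (d = number of dishonest ones), and a link certifies
   y_i(j) = y_j(j).  The map x |-> h_x^T w is evaluation of the polynomial of
   degree < k interpolating w at the nodes 1..k, so two honest processors with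
   different messages have fewer than k = t/5 + 1 common honest links.  Three
   successful processors with pairwise different messages would therefore give
   3 (n - t - d) <= (n - d) + 3 (t/5), which contradicts n >= 3t + 1.  Phase 2
   only turns success indicators off, so the bound already holds after Phase 1. *)

Local Open Scope ring_scope.

Section LagrangeInterpolation.
Variables (F : fieldType) (k : nat) (e : 'I_k -> F).

Definition lagrange_basis (j : 'I_k) : {poly F} :=
  \prod_(p < k | p != j) ((e j - e p)^-1 *: ('X - (e p)%:P)).

Definition lagrange_interp (a : 'I_k -> F) : {poly F} :=
  \sum_(j < k) a j *: lagrange_basis j.

Lemma horner_lagrange_basis j z :
  (lagrange_basis j).[z] = \prod_(p < k | p != j) ((z - e p) / (e j - e p)).
Proof.
rewrite horner_prod; apply: eq_bigr => p _.
by rewrite hornerZ hornerXsubC mulrC.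
Qed.

Lemma horner_lagrange_interp a z :
  (lagrange_interp a).[z] =
  \sum_(j < k) \prod_(p < k | p != j) ((z - e p) / (e j - e p)) * a j.
Proof.
rewrite horner_sum; apply: eq_bigr => j _.
by rewrite hornerZ horner_lagrange_basis mulrC.
Qed.

Lemma size_lagrange_basis j : (size (lagrange_basis j) <= k)%N.
Proof.
apply: leq_trans (size_poly_prod_leq _ _) _.
have size_factor p : (size ((e j - e p)^-1 *: ('X - (e p)%:P)) <= 2)%N.
  by rewrite (leq_trans (size_scale_leq _ _)) ?size_XsubC.
have := leq_sum (index_enum _) (fun p (_ : p != j) => size_factor p).
rewrite sum_nat_const cardC1 card_ord.
have := ltn_ord j; set S := (\sum_(_ | _) _)%N; rewrite -subn1; lia.
Qed.

Lemma size_lagrange_interp a : (size (lagrange_interp a) <= k)%N.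
Proof.
apply: leq_trans (size_sum _ _ _) _; apply/bigmax_leqP => j _.
exact: leq_trans (size_scale_leq _ _) (size_lagrange_basis j).
Qed.

Hypothesis e_inj : injective e.

Lemma lagrange_basis_node i j : (lagrange_basis j).[e i] = (i == j)%:R.
Proof.
rewrite horner_lagrange_basis; have [<- | neq_ij] := eqVneq i j.
  by apply: big1 => p neq_pi; rewrite divff // subr_eq0 (inj_eq e_inj) eq_sym.
by rewrite (bigD1 i) //= (subrr (e i)) !mul0r.
Qed.

Lemma lagrange_interp_node a i : (lagrange_interp a).[e i] = a i.
Proof.
rewrite horner_sum (bigD1 i) //= hornerZ lagrange_basis_node eqxx mulr1.
rewrite big1 ?addr0 // => j neq_ji.
by rewrite hornerZ lagrange_basis_node eq_sym (negbTE neq_ji) mulr0.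
Qed.

Lemma lagrange_interp_agree (zs : seq F) a b : uniq zs -> (k <= size zs)%N ->
  {in zs, forall z, (lagrange_interp a).[z] = (lagrange_interp b).[z]} -> a =1 b.
Proof.
move=> uniq_zs k_le_zs agree i.
have /eqP : lagrange_interp a - lagrange_interp b = 0.
  apply: (roots_geq_poly_eq0 (rs := zs)) => //.
    by apply/allP => z /agree; rewrite /root hornerD hornerN => ->; rewrite subrr.
  apply: leq_trans k_le_zs.
  by rewrite (leq_trans (size_polyD _ _)) // size_polyN geq_max !size_lagrange_interp.
by rewrite subr_eq0 => /eqP/(congr1 (horner^~ (e i))); rewrite !lagrange_interp_node.
Qed.

End LagrangeInterpolation.

Lemma cpar_cpred n t l : cpred n t l (cpar n t l).
Proof. by rewrite /cpar; case: ex_minnP. Qed.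

Lemma encode_inj n t l (F : finFieldType) (toF : (cpar n t l).-tuple bool -> F) :
  injective toF -> injective (encode toF).
Proof.
move=> toF_inj m1 m2 eq_code; apply/val_inj/(@eq_from_nth _ false).
  by rewrite !size_tuple.
have /andP [l_le_ck _] := cpar_cpred n t l.
move=> b; rewrite size_tuple => b_lt_l.
have c_gt0 : (0 < cpar n t l)%N by move: l_le_ck; case: (cpar n t l); lia.
have blk_lt_k : (b %/ cpar n t l < kpar t)%N by rewrite ltn_divLR //; lia.
(* Bit b of the padded message is bit b mod c of block b / c. *)
have := congr1 (fun M : 'rV[F]_(kpar t) => M 0 (Ordinal blk_lt_k)) eq_code.
rewrite !mxE => /toF_inj /(congr1 (fun tu => tnth tu (Ordinal (ltn_pmod b c_gt0)))).
by rewrite !tnth_mktuple /= -divn_eq !nth_cat !size_tuple b_lt_l.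
Qed.

Lemma cardsU3_bonferroni (T : finType) (A B C : {set T}) :
  (#|A| + #|B| + #|C| <= #|A :|: B :|: C| + #|A :&: B| + #|A :&: C| + #|B :&: C|)%N.
Proof.
have := cardsUI A B; have := cardsUI (A :|: B) C.
have := cardsUI (A :&: C) (B :&: C); rewrite setIUl; lia.
Qed.

Section COOLPhaseOne.
Variables (n t l : nat) (F : finFieldType).
Variables (toF : (cpar n t l).-tuple bool -> F) (emb : nat -> F).
Variables (honest : {set 'I_n}) (w : 'I_n -> l.-tuple bool).
Variable adv1 : 'I_n -> 'I_n -> F * F.
Hypothesis toF_inj : injective toF.
Hypothesis emb_inj : {in [pred x : nat | (0 < x <= n)%N] &, injective emb}.
Hypothesis k_le_n : (kpar t <= n)%N.

Local Notation y := (yval toF emb w).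
Local Notation u := (u1 toF emb honest w adv1).

Definition honest_links (i : 'I_n) : {set 'I_n} := honest :&: [set j | u i j].

Lemma yval_link i j : j \in honest -> u i j -> y i (lab j) = y j (lab j).
Proof.
rewrite /u1 /recv1 => j_honest; case: eqVneq => [-> // | _].
by rewrite j_honest => /eqP [_ ->].
Qed.

Lemma card_honest_links i : s1 toF emb honest w adv1 i ->
  (n - t <= #|honest_links i| + #|~: honest|)%N.
Proof.
move=> s1i; apply: leq_trans s1i _.
rewrite -(cardsID honest [set j | u i j]) setIC leq_add2l.
by apply: subset_leq_card; rewrite setDE subsetIr.
Qed.

Let node (p : 'I_(kpar t)) : F := emb p.+1.

Lemma node_inj : injective node.
Proof.
have node_in (p : 'I_(kpar t)) : p.+1 \in [pred x : nat | (0 < x <= n)%N].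
  by rewrite inE /= (leq_trans (ltn_ord p) k_le_n).
by move=> p q /(emb_inj (node_in p) (node_in q)) [] /val_inj.
Qed.

Let lab_in (j : 'I_n) : lab j \in [pred x : nat | (0 < x <= n)%N].
Proof. by rewrite inE /lab /= ltn_ord. Qed.

Lemma yval_lagrange i x :
  y i x = (lagrange_interp node (encode toF (w i) 0)).[emb x].
Proof. by rewrite horner_lagrange_interp. Qed.

Lemma eq_msg_of_agree i1 i2 (J : {set 'I_n}) : (kpar t <= #|J|)%N ->
  {in J, forall j, y i1 (lab j) = y i2 (lab j)} -> w i1 = w i2.
Proof.
move=> k_le_J agree; apply: (encode_inj toF_inj); apply/rowP => p.
apply: (lagrange_interp_agree node_inj (zs := [seq emb (lab j) | j <- enum J])).
- rewrite map_inj_in_uniq ?enum_uniq // => j1 j2 _ _ eq_emb.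
  exact/val_inj/succn_inj/(emb_inj (lab_in j1) (lab_in j2)).
- by rewrite size_map -cardE.
- move=> z /mapP [j]; rewrite mem_enum => /agree + ->.
  by rewrite !yval_lagrange.
Qed.

Lemma card_honest_links_meet i1 i2 : w i1 != w i2 ->
  (#|honest_links i1 :&: honest_links i2| < kpar t)%N.
Proof.
move=> neq_w; rewrite ltnNge; apply: contra neq_w => k_le_J; apply/eqP.
apply: (eq_msg_of_agree k_le_J) => j.
rewrite !inE => /andP [/andP [j_honest u1j] /andP [_ u2j]].
by rewrite (yval_link j_honest u1j) (yval_link j_honest u2j).
Qed.

Lemma card_s1_messages_le2 : (3 * t + 1 <= n)%N -> (#|~: honest| <= t)%N ->
  (#|[set w i | i in [set i in honest | s1 toF emb honest w adv1 i]]| <= 2)%N.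
Proof.
move=> n_gt_3t few_dishonest; rewrite leqNgt; apply/negP.
move=> /card_gt2P [_ [_ [_ [[/imsetP [i1 + ->] /imsetP [i2 + ->] /imsetP [i3 + ->]]]]]].
rewrite !inE => /andP [_ s1_1] /andP [_ s1_2] /andP [_ s1_3] [ne12 ne23 ne31].
have := card_honest_links s1_1; have := card_honest_links s1_2.
have := card_honest_links s1_3; have := card_honest_links_meet ne12.
have := card_honest_links_meet ne23; rewrite eq_sym in ne31.
have := card_honest_links_meet ne31.
have := cardsU3_bonferroni (honest_links i1) (honest_links i2) (honest_links i3).
have : (#|honest_links i1 :|: honest_links i2 :|: honest_links i3| <= #|honest|)%N.
  by apply: subset_leq_card; rewrite !subUset !subsetIl.
have := cardsC honest; rewrite card_ord /kpar; lia.
Qed.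

End COOLPhaseOne.

Theorem lemma11 (n t l : nat) (F : finFieldType)
  (toF : (cpar n t l).-tuple bool -> F) (emb : nat -> F)
  (honest : {set 'I_n}) (w : 'I_n -> l.-tuple bool)
  (adv1 : 'I_n -> 'I_n -> F * F) (adv2 : 'I_n -> 'I_n -> bool) :
  (3 * t + 1 <= n)%N ->
  #|F| = (2 ^ cpar n t l)%N ->
  bijective toF ->
  {in [pred x : nat | (0 < x <= n)%N] &, injective emb} ->
  (forall x : nat, (0 < x <= n)%N -> emb x != 0%R) ->
  (#|~: honest| <= t)%N ->
  (eta2 toF emb honest w adv1 adv2 <= 2)%N.
Proof.
move=> n_gt_3t _ toF_bij emb_inj _ few_dishonest.
have k_le_n : (kpar t <= n)%N by rewrite /kpar; lia.
have := card_s1_messages_le2 w adv1 (bij_inj toF_bij) emb_inj k_le_n n_gt_3t few_dishonest.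
apply: leq_trans; apply/subset_leq_card/imsetS/subsetP => i.
by rewrite !inE => /andP [-> /andP [-> _]].
Qed.
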